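(* If $\Gamma;\Delta\vdash t:\rho$ in $\lambda\mu\mathrm{T}$, then $t\in\mathrm{SN}_A$, i.e. there is no infinite $\to_A$-reduction sequence starting from $t$.
   Context: The calculus $\lambda\mu\mathrm{T}$. Types: $\rho,\sigma,\tau ::= \mathbb{N} \mid \sigma\to\tau$. Over infinite sets of $\lambda$-variables $x,y,\dots$ and $\mu$-variables $\alpha,\beta,\gamma,\dots$, terms and commands are mutually defined by $t,r,s ::= x \mid \lambda x{:}\rho.r \mid t\,s \mid \mu\alpha{:}\rho.c \mid 0 \mid \mathsf{S}\,t \mid \mathsf{nrec}_\rho\ r\ s\ t$ and $c ::= [\alpha]t$ (type annotations often omitted). Terms are considered modulo renaming of bound variables; $t[x:=r]$ is capture-avoiding substitution. Numerals: $\underline{n} := \mathsf{S}^n 0$. Contexts: $E ::= \Box \mid E\,t \mid \mathsf{S}\,E \mid \mathsf{nrec}\ r\ s\ E$; $E[u]$ is the result of filling the hole with $u$. Structural substitution $t[\alpha:=\beta E]$ is defined homomorphically on all constructs (capture-avoiding for both kinds of variables) except $([\alpha]u)[\alpha:=\beta E] := [\beta]E[u[\alpha:=\beta E]]$ (and $([\gamma]u)[\alpha:=\beta E]:=[\gamma](u[\alpha:=\beta E])$ for $\gamma\neq\alpha$). Typing judgments $\Gamma;\Delta\vdash t:\rho$ and $\Gamma;\Delta\vdash c$ are generated by: (var) $x:\rho\in\Gamma \Rightarrow \Gamma;\Delta\vdash x:\rho$; (lambda) $\Gamma,x:\sigma;\Delta\vdash t:\tau \Rightarrow \Gamma;\Delta\vdash\lambda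 x{:}\sigma.t:\sigma\to\tau$; (app) $\Gamma;\Delta\vdash t:\sigma\to\tau$, $\Gamma;\Delta\vdash s:\sigma$ $\Rightarrow \Gamma;\Delta\vdash ts:\tau$; (zero) $\Gamma;\Delta\vdash 0:\mathbb{N}$; (suc) $\Gamma;\Delta\vdash t:\mathbb{N}\Rightarrow\Gamma;\Delta\vdash \mathsf{S}\,t:\mathbb{N}$; (nrec) $\Gamma;\Delta\vdash r:\rho$, $\Gamma;\Delta\vdash s:\mathbb{N}\to\rho\to\rho$, $\Gamma;\Delta\vdash t:\mathbb{N}$ $\Rightarrow \Gamma;\Delta\vdash\mathsf{nrec}_\rho\ r\ s\ t:\rho$; (activate) $\Gamma;\Delta,\alpha:\rho\vdash c\Rightarrow\Gamma;\Delta\vdash\mu\alpha{:}\rho.c:\rho$; (passivate) $\Gamma;\Delta\vdash t:\rho$, $\alpha:\rho\in\Delta$ $\Rightarrow \Gamma;\Delta\vdash[\alpha]t$. $\to_A$ is the compatible closure (on terms and commands) of the rules: $(\lambda x.t)r\to t[x:=r]$; $\mathsf{S}(\mu\alpha.c)\to\mu\alpha.c[\alpha:=\alpha(\mathsf{S}\,\Box)]$; $(\mu\alpha.c)s\to\mu\alpha.c[\alpha:=\alpha(\Box\,s)]$; $\mathsf{nrec}\ r\ s\ 0\to r$; $\mathsf{nrec}\ r\ s\ (\mathsf{S}\,\underline{n})\to s\ \underline{n}\ (\mathsf{nrec}\ r\ s\ \underline{n})$; $\mathsf{nrec}\ r\ s\ (\mu\alpha.c)\to\mu\alpha.c[\alpha:=\alpha(\mathsf{nrec}\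 r\ s\ \Box)]$. $\mathrm{SN}_A$ is the set of terms inductively defined by: $t\in\mathrm{SN}_A$ whenever every $t'$ with $t\to_A t'$ is in $\mathrm{SN}_A$. *)

(* The calculus lambda-mu-T with de Bruijn indices.
   Two independent de Bruijn index spaces: lambda-variables and mu-variables. *)
From Stdlib Require Import Arith List.
Import ListNotations.

Inductive ty : Type :=
| TNat : ty
| TArr : ty -> ty -> ty.

(* A command [beta]t only occurs as the body of a mu-abstraction,
   so  mu alpha:rho. [beta] t  is represented as  Mu rho beta t,
   where the mu-variable 0 inside (beta and t) is the bound alpha. *)
Inductive tm : Type :=
| Var : nat -> tm
| Lam : ty -> tm -> tm
| App : tm -> tm -> tm
| Mu  : ty -> nat -> tm -> tm
| Zero : tm
| Suc : tm -> tm
| Nrec : ty -> tm -> tm -> tm -> tm.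

Fixpoint lift_l (k : nat) (t : tm) : tm :=
  match t with
  | Var n => Var (if n <? k then n else S n)
  | Lam r b => Lam r (lift_l (S k) b)
  | App a b => App (lift_l k a) (lift_l k b)
  | Mu r be b => Mu r be (lift_l k b)
  | Zero => Zero
  | Suc a => Suc (lift_l k a)
  | Nrec r a b c => Nrec r (lift_l k a) (lift_l k b) (lift_l k c)
  end.

Fixpoint lift_m (k : nat) (t : tm) : tm :=
  match t with
  | Var n => Var n
  | Lam r b => Lam r (lift_m k b)
  | App a b => App (lift_m k a) (lift_m k b)
  | Mu r be b => Mu r (if be <? S k then be else S be) (lift_m (S k) b)
  | Zero => Zero
  | Suc a => Suc (lift_m k a)
  | Nrec r a b c => Nrec r (lift_m k a) (lift_m k b) (lift_m k c)
  end.

Fixpoint subst_l (k : nat) (u : tm) (t : tm) : tm :=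
  match t with
  | Var n => if n <? k then Var n else if n =? k then u else Var (pred n)
  | Lam r b => Lam r (subst_l (S k) (lift_l 0 u) b)
  | App a b => App (subst_l k u a) (subst_l k u b)
  | Mu r be b => Mu r be (subst_l k (lift_m 0 u) b)
  | Zero => Zero
  | Suc a => Suc (subst_l k u a)
  | Nrec r a b c => Nrec r (subst_l k u a) (subst_l k u b) (subst_l k u c)
  end.

Inductive ectx : Type :=
| Hole : ectx
| EApp : ectx -> tm -> ectx
| ESuc : ectx -> ectx
| ENrec : ty -> tm -> tm -> ectx -> ectx.

Fixpoint fill (E : ectx) (u : tm) : tm :=
  match E with
  | Hole => u
  | EApp E' t => App (fill E' u) t
  | ESuc E' => Suc (fill E' u)
  | ENrec r a b E' => Nrec r a b (fill E' u)
  end.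

Fixpoint liftE_l (k : nat) (E : ectx) : ectx :=
  match E with
  | Hole => Hole
  | EApp E' t => EApp (liftE_l k E') (lift_l k t)
  | ESuc E' => ESuc (liftE_l k E')
  | ENrec r a b E' => ENrec r (lift_l k a) (lift_l k b) (liftE_l k E')
  end.

Fixpoint liftE_m (k : nat) (E : ectx) : ectx :=
  match E with
  | Hole => Hole
  | EApp E' t => EApp (liftE_m k E') (lift_m k t)
  | ESuc E' => ESuc (liftE_m k E')
  | ENrec r a b E' => ENrec r (lift_m k a) (lift_m k b) (liftE_m k E')
  end.

(* structural substitution t[a := a E] (the case beta = alpha used by the
   reduction rules): every command [a]u becomes [a] E[u[a := a E]]. *)
Fixpoint msub (a : nat) (E : ectx) (t : tm) : tm :=
  match t with
  | Var n => Var n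
  | Lam r b => Lam r (msub a (liftE_l 0 E) b)
  | App x y => App (msub a E x) (msub a E y)
  | Mu r be b =>
      let E' := liftE_m 0 E in
      let b' := msub (S a) E' b in
      Mu r be (if be =? S a then fill E' b' else b')
  | Zero => Zero
  | Suc x => Suc (msub a E x)
  | Nrec r x y z => Nrec r (msub a E x) (msub a E y) (msub a E z)
  end.

(* structural substitution on the body command [be]b of a mu whose bound
   variable is mu-variable 0; E lives outside the binder. *)
Definition mu_body_sub (E : ectx) (be : nat) (b : tm) : tm :=
  let E' := liftE_m 0 E in
  let b' := msub 0 E' b in
  if be =? 0 then fill E' b' else b'.

Fixpoint is_numeral (t : tm) : bool :=
  match t with
  | Zero => true
  | Suc t' => is_numeral t'
  | _ => false
  end.

Definition cod (r : ty) : ty :=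
  match r with TArr _ t => t | TNat => TNat end.

Inductive stepA : tm -> tm -> Prop :=
| st_beta r b u : stepA (App (Lam r b) u) (subst_l 0 u b)
| st_suc_mu r be b :
    stepA (Suc (Mu r be b)) (Mu TNat be (mu_body_sub (ESuc Hole) be b))
| st_app_mu r be b s :
    stepA (App (Mu r be b) s) (Mu (cod r) be (mu_body_sub (EApp Hole s) be b))
| st_nrec_zero r a b : stepA (Nrec r a b Zero) a
| st_nrec_suc r a b n :
    is_numeral n = true ->
    stepA (Nrec r a b (Suc n)) (App (App b n) (Nrec r a b n))
| st_nrec_mu r a b r' be c :
    stepA (Nrec r a b (Mu r' be c))
          (Mu r be (mu_body_sub (ENrec r a b Hole) be c))
| st_lam r b b' : stepA b b' -> stepA (Lam r b) (Lam r b')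
| st_app1 a a' b : stepA a a' -> stepA (App a b) (App a' b)
| st_app2 a b b' : stepA b b' -> stepA (App a b) (App a b')
| st_mu r be b b' : stepA b b' -> stepA (Mu r be b) (Mu r be b')
| st_suc a a' : stepA a a' -> stepA (Suc a) (Suc a')
| st_nrec1 r a a' b c : stepA a a' -> stepA (Nrec r a b c) (Nrec r a' b c)
| st_nrec2 r a b b' c : stepA b b' -> stepA (Nrec r a b c) (Nrec r a b' c)
| st_nrec3 r a b c c' : stepA c c' -> stepA (Nrec r a b c) (Nrec r a b c').

Inductive SN_A : tm -> Prop :=
| SN_A_intro t : (forall t', stepA t t' -> SN_A t') -> SN_A t.

(* typing Gamma; Delta |- t : rho  (contexts are lists, index 0 = innermost) *)
Inductive has_type : list ty -> list ty -> tm -> ty -> Prop :=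
| T_var G D n r : nth_error G n = Some r -> has_type G D (Var n) r
| T_lam G D s b t : has_type (s :: G) D b t -> has_type G D (Lam s b) (TArr s t)
| T_app G D a b s t :
    has_type G D a (TArr s t) -> has_type G D b s -> has_type G D (App a b) t
| T_zero G D : has_type G D Zero TNat
| T_suc G D a : has_type G D a TNat -> has_type G D (Suc a) TNat
| T_nrec G D r a b c :
    has_type G D a r -> has_type G D b (TArr TNat (TArr r r)) ->
    has_type G D c TNat -> has_type G D (Nrec r a b c) r
| T_mu G D r be b s :            (* activate + passivate *)
    has_type G (r :: D) b s -> nth_error (r :: D) be = Some s ->
    has_type G D (Mu r be b) r.

From Stdlib Require Import Arith List Lia FunctionalExtensionality.

(* A type [r] determines the reducible evaluation
   contexts [RedCtx r], and a term is reducible at [r] ([RedTm r]) when it is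
   strongly normalizing in every reducible context of type [r].
   The theorem is adequacy for the identity instantiation by variables and
   empty contexts. *)

Ltac nat_cases := repeat match goal with
 | |- context [?a <? ?b] => destruct (Nat.ltb_spec a b)
 | |- context [?a =? ?b] => destruct (Nat.eqb_spec a b)
 end.

Ltac index_arith :=
  do 4 (cbn [lift_l lift_m subst_l]; nat_cases);
  try (f_equal; lia); try lia; try reflexivity.

Fixpoint compE (E F : ectx) : ectx :=
  match E with
  | Hole => F
  | EApp E' t => EApp (compE E' F) t
  | ESuc E' => ESuc (compE E' F)
  | ENrec r a b E' => ENrec r a b (compE E' F)
  end.

Lemma fill_compE E F t : fill (compE E F) t = fill E (fill F t).
Proof. induction E; simpl; congruence. Qed.

Lemma compE_Hole E : compE E Hole = E.
Proof. induction E; simpl; congruence. Qed.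

Fixpoint substE (k : nat) (u : tm) (E : ectx) : ectx :=
  match E with
  | Hole => Hole
  | EApp E' t => EApp (substE k u E') (subst_l k u t)
  | ESuc E' => ESuc (substE k u E')
  | ENrec r a b E' => ENrec r (subst_l k u a) (subst_l k u b) (substE k u E')
  end.

Fixpoint msubE (x : nat) (F : ectx) (E : ectx) : ectx :=
  match E with
  | Hole => Hole
  | EApp E' t => EApp (msubE x F E') (msub x F t)
  | ESuc E' => ESuc (msubE x F E')
  | ENrec r a b E' => ENrec r (msub x F a) (msub x F b) (msubE x F E')
  end.

Lemma lift_l_lift_l v : forall i j, i <= j ->
  lift_l (S j) (lift_l i v) = lift_l i (lift_l j v).
Proof.
  induction v; intros i j H; simpl; try (f_equal; auto; fail).
  - f_equal; nat_cases; lia.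
  - f_equal; apply IHv; lia.
Qed.

Lemma lift_m_lift_m v : forall i j, i <= j ->
  lift_m (S j) (lift_m i v) = lift_m i (lift_m j v).
Proof.
  induction v; intros i j H; simpl; try (f_equal; auto; fail).
  f_equal; [nat_cases; lia | apply IHv; lia].
Qed.

Lemma lift_l_lift_m v : forall k j, lift_l k (lift_m j v) = lift_m j (lift_l k v).
Proof. induction v; intros; simpl; f_equal; auto. Qed.

Lemma subst_l_lift_l v : forall k u, subst_l k u (lift_l k v) = v.
Proof. induction v; intros; simpl; f_equal; auto. index_arith. Qed.

Ltac lift_l_comm := first [apply lift_l_lift_l; lia | symmetry; apply lift_l_lift_l; lia].
Ltac lift_m_comm := first [apply lift_m_lift_m; lia | symmetry; apply lift_m_lift_m; lia].
Ltac lift_lm_comm := first [apply lift_l_lift_m | symmetry; apply lift_l_lift_m].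

Lemma lift_l_subst_l b : forall j k u, j <= k ->
  lift_l k (subst_l j u b) = subst_l j (lift_l k u) (lift_l (S k) b).
Proof.
  induction b; intros j k u H; simpl; try (f_equal; auto; fail).
  - index_arith.
  - f_equal. rewrite IHb by lia. f_equal. lift_l_comm.
  - f_equal. rewrite IHb by lia. f_equal. lift_lm_comm.
Qed.

Lemma subst_l_lift_l_below v : forall j k u, j <= k ->
  subst_l (S k) (lift_l j u) (lift_l j v) = lift_l j (subst_l k u v).
Proof.
  induction v; intros j k u H; simpl; try (f_equal; auto; fail).
  - index_arith.
  - f_equal. rewrite <- IHv by lia. f_equal. lift_l_comm.
  - f_equal. rewrite <- IHv by lia. f_equal. lift_lm_comm.
Qed.

Lemma lift_m_subst_l v : forall j k u,
  lift_m j (subst_l k u v) = subst_l k (lift_m j u) (lift_m j v).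
Proof.
  induction v; intros; simpl; try (f_equal; auto; fail).
  - index_arith.
  - f_equal. rewrite IHv. f_equal. lift_lm_comm.
  - f_equal. rewrite IHv. f_equal. lift_m_comm.
Qed.

Lemma subst_l_subst_l b : forall j k u v, j <= k ->
  subst_l k u (subst_l j v b) = subst_l j (subst_l k u v) (subst_l (S k) (lift_l j u) b).
Proof.
  induction b; intros j k u v H; simpl; try (f_equal; auto; fail).
  - index_arith; subst; rewrite subst_l_lift_l; auto.
  - f_equal. rewrite IHb by lia. f_equal.
    + apply subst_l_lift_l_below; lia.
    + f_equal. lift_l_comm.
  - f_equal. rewrite IHb by lia. f_equal.
    + symmetry; apply lift_m_subst_l.
    + f_equal. lift_lm_comm.
Qed.

Lemma lift_l_fill E : forall k t, lift_l k (fill E t) = fill (liftE_l k E) (lift_l k t).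
Proof. induction E; intros; simpl; f_equal; auto. Qed.
Lemma lift_m_fill E : forall k t, lift_m k (fill E t) = fill (liftE_m k E) (lift_m k t).
Proof. induction E; intros; simpl; f_equal; auto. Qed.
Lemma subst_l_fill E : forall k u t, subst_l k u (fill E t) = fill (substE k u E) (subst_l k u t).
Proof. induction E; intros; simpl; f_equal; auto. Qed.
Lemma msub_fill E : forall a F t, msub a F (fill E t) = fill (msubE a F E) (msub a F t).
Proof. induction E; intros; simpl; f_equal; auto. Qed.

Lemma liftE_l_compE E F k : liftE_l k (compE E F) = compE (liftE_l k E) (liftE_l k F).
Proof. induction E; simpl; f_equal; auto. Qed.
Lemma liftE_m_compE E F k : liftE_m k (compE E F) = compE (liftE_m k E) (liftE_m k F).
Proof. induction E; simpl; f_equal; auto. Qed.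

Lemma liftE_l_liftE_l E : forall i j, i <= j ->
  liftE_l (S j) (liftE_l i E) = liftE_l i (liftE_l j E).
Proof. induction E; intros; simpl; f_equal; auto; lift_l_comm. Qed.
Lemma liftE_m_liftE_m E : forall i j, i <= j ->
  liftE_m (S j) (liftE_m i E) = liftE_m i (liftE_m j E).
Proof. induction E; intros; simpl; f_equal; auto; lift_m_comm. Qed.
Lemma liftE_l_liftE_m E : forall k j, liftE_l k (liftE_m j E) = liftE_m j (liftE_l k E).
Proof. induction E; intros; simpl; f_equal; auto; lift_lm_comm. Qed.
Lemma substE_liftE_l E : forall k u, substE k u (liftE_l k E) = E.
Proof. induction E; intros; simpl; f_equal; auto; apply subst_l_lift_l. Qed.
Lemma substE_liftE_l_below E : forall j k u, j <= k ->
  substE (S k) (lift_l j u) (liftE_l j E) = liftE_l j (substE k u E).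
Proof. induction E; intros; simpl; f_equal; auto; apply subst_l_lift_l_below; auto. Qed.
Lemma liftE_m_substE E : forall j k u,
  liftE_m j (substE k u E) = substE k (lift_m j u) (liftE_m j E).
Proof. induction E; intros; simpl; f_equal; auto; apply lift_m_subst_l. Qed.

Ltac liftE_l_comm := first [apply liftE_l_liftE_l; lia | symmetry; apply liftE_l_liftE_l; lia].
Ltac liftE_m_comm := first [apply liftE_m_liftE_m; lia | symmetry; apply liftE_m_liftE_m; lia].
Ltac liftE_lm_comm := first [apply liftE_l_liftE_m | symmetry; apply liftE_l_liftE_m].

Lemma numeral_lift_l m k : is_numeral m = true -> lift_l k m = m.
Proof. induction m; simpl; intros; try discriminate; f_equal; auto. Qed.
Lemma numeral_lift_m m k : is_numeral m = true -> lift_m k m = m.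
Proof. induction m; simpl; intros; try discriminate; f_equal; auto. Qed.
Lemma numeral_subst_l m k u : is_numeral m = true -> subst_l k u m = m.
Proof. induction m; simpl; intros; try discriminate; f_equal; auto. Qed.
Lemma numeral_msub m a E : is_numeral m = true -> msub a E m = m.
Proof. induction m; simpl; intros; try discriminate; f_equal; auto. Qed.

(* Interaction of the structural substitution [msub a E] with the other
   operations.  [msub] keeps the mu-variables of its argument, so lifting
   mu-variables only renames the target [a] and lifts [E]. *)

Lemma lift_m_msub b : forall j a E,
  lift_m j (msub a E b) = msub (if a <? j then a else S a) (liftE_m j E) (lift_m j b).
Proof.
  induction b; intros j a E; cbn [lift_m msub]; try (f_equal; auto; fail).
  - f_equal. rewrite IHb. f_equal. liftE_lm_comm.
  - f_equal. nat_cases; rewrite ?lift_m_fill, IHb; nat_cases; try lia; subst;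
      try reflexivity;
      rewrite (liftE_m_liftE_m E 0 j) by lia; reflexivity.
Qed.

Lemma lift_m0_msub b a E :
  lift_m 0 (msub a E b) = msub (S a) (liftE_m 0 E) (lift_m 0 b).
Proof. rewrite lift_m_msub. reflexivity. Qed.

Lemma liftE_m_msubE F : forall j a E,
  liftE_m j (msubE a E F) = msubE (if a <? j then a else S a) (liftE_m j E) (liftE_m j F).
Proof. induction F; intros; simpl; f_equal; auto; apply lift_m_msub. Qed.

Lemma liftE_m0_msubE F a E :
  liftE_m 0 (msubE a E F) = msubE (S a) (liftE_m 0 E) (liftE_m 0 F).
Proof. rewrite liftE_m_msubE. reflexivity. Qed.

Lemma lift_l_msub b : forall k a E, lift_l k (msub a E b) = msub a (liftE_l k E) (lift_l k b).
Proof.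
  induction b; intros k a E; cbn [lift_l msub]; try (f_equal; auto; fail).
  - f_equal. rewrite IHb. f_equal. liftE_l_comm.
  - f_equal. destruct (n =? S a);
      rewrite ?lift_l_fill, IHb, liftE_l_liftE_m; reflexivity.
Qed.

Lemma liftE_l_msubE F : forall k a E,
  liftE_l k (msubE a E F) = msubE a (liftE_l k E) (liftE_l k F).
Proof. induction F; intros; simpl; f_equal; auto; apply lift_l_msub. Qed.

(* After [lift_m k] the mu-variable [k] does not occur, so [msub k] is void. *)
Lemma msub_lift_m_fresh v : forall k E, msub k E (lift_m k v) = lift_m k v.
Proof.
  induction v; intros k E; cbn [lift_m msub]; try (f_equal; auto; fail).
  f_equal. nat_cases; try lia; auto.
Qed.

Lemma msubE_liftE_m_fresh F : forall k E, msubE k E (liftE_m k F) = liftE_m k F.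
Proof. induction F; intros; simpl; f_equal; auto; apply msub_lift_m_fresh. Qed.

Lemma msub_subst_l b : forall k a E u,
  msub a E (subst_l k u b) = subst_l k (msub a E u) (msub a (liftE_l k E) b).
Proof.
  induction b; intros k a E u; cbn [subst_l msub]; try (f_equal; auto; fail).
  - nat_cases; reflexivity.
  - f_equal. rewrite IHb. f_equal.
    + symmetry. apply lift_l_msub.
    + f_equal. liftE_l_comm.
  - f_equal. rewrite <- liftE_l_liftE_m.
    destruct (n =? S a);
      rewrite ?subst_l_fill, ?substE_liftE_l, IHb, lift_m_msub; reflexivity.
Qed.

Lemma subst_l_msub b : forall k a u E,
  subst_l k (lift_m a u) (msub a E b)
  = msub a (substE k (lift_m a u) E) (subst_l k (lift_m a u) b).
Proof.
  induction b; intros k a u E; cbn [subst_l msub]; try (f_equal; auto; fail).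
  - nat_cases; try reflexivity. symmetry; apply msub_lift_m_fresh.
  - f_equal. rewrite lift_l_lift_m, IHb, <- lift_l_lift_m, substE_liftE_l_below by lia.
    reflexivity.
  - f_equal. rewrite <- (lift_m_lift_m u 0 a) by lia.
    destruct (n =? S a);
      rewrite ?subst_l_fill, IHb, liftE_m_substE, <- (lift_m_lift_m u 0 a) by lia;
      reflexivity.
Qed.

Lemma msub_msub_distinct b : forall a c E0 F, a <> c ->
  msub a (liftE_m c E0) (msub c F b)
  = msub c (msubE a (liftE_m c E0) F) (msub a (liftE_m c E0) b).
Proof.
  induction b; intros a c E0 F Hac; cbn [msub msubE]; try (f_equal; auto; fail).
  - f_equal. rewrite liftE_l_msubE, !liftE_l_liftE_m, IHb by auto. reflexivity.
  - f_equal. rewrite liftE_m0_msubE, <- (liftE_m_liftE_m E0 0 c) by lia.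
    destruct (Nat.eqb_spec n (S a)); destruct (Nat.eqb_spec n (S c)); try lia;
      rewrite ?msub_fill, ?msubE_liftE_m_fresh, ?IHb by lia; reflexivity.
Qed.

Lemma msub_msub_same b : forall a E F0,
  msub a E (msub a (liftE_m a F0) b) = msub a (compE E (liftE_m a F0)) b.
Proof.
  induction b; intros a E F0; cbn [msub msubE]; try (f_equal; auto; fail).
  - f_equal. rewrite liftE_l_compE, liftE_l_liftE_m, IHb. reflexivity.
  - f_equal. rewrite liftE_m_compE, <- (liftE_m_liftE_m F0 0 a) by lia.
    destruct (Nat.eqb_spec n (S a));
      rewrite ?msub_fill, ?msubE_liftE_m_fresh, IHb, ?fill_compE; reflexivity.
Qed.

Lemma mu_body_sub_compE E2 F be b :
  mu_body_sub E2 be (mu_body_sub F be b) = mu_body_sub (compE E2 F) be b.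
Proof.
  unfold mu_body_sub. rewrite liftE_m_compE.
  destruct (be =? 0);
    rewrite ?msub_fill, ?msubE_liftE_m_fresh, msub_msub_same, ?fill_compE; reflexivity.
Qed.

Lemma msub_mu_body_sub a E F be b :
  (if be =? S a
   then fill (liftE_m 0 E) (msub (S a) (liftE_m 0 E) (mu_body_sub F be b))
   else msub (S a) (liftE_m 0 E) (mu_body_sub F be b))
  = mu_body_sub (msubE a E F) be
      (if be =? S a then fill (liftE_m 0 E) (msub (S a) (liftE_m 0 E) b)
       else msub (S a) (liftE_m 0 E) b).
Proof.
  unfold mu_body_sub. rewrite liftE_m0_msubE.
  destruct (Nat.eqb_spec be 0); destruct (Nat.eqb_spec be (S a)); try lia;
    rewrite ?msub_fill, ?msubE_liftE_m_fresh, ?msub_msub_distinct by lia; reflexivity.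
Qed.

Lemma subst_l_mu_body_sub k u F be b :
  subst_l k (lift_m 0 u) (mu_body_sub F be b)
  = mu_body_sub (substE k u F) be (subst_l k (lift_m 0 u) b).
Proof.
  unfold mu_body_sub. rewrite liftE_m_substE.
  destruct (be =? 0); rewrite ?subst_l_fill, subst_l_msub; reflexivity.
Qed.

Lemma lift_l_mu_body_sub k F be b :
  lift_l k (mu_body_sub F be b) = mu_body_sub (liftE_l k F) be (lift_l k b).
Proof.
  unfold mu_body_sub. rewrite <- liftE_l_liftE_m.
  destruct (be =? 0); rewrite ?lift_l_fill, lift_l_msub; reflexivity.
Qed.

Lemma lift_m_mu_body_sub k F be b :
  lift_m (S k) (mu_body_sub F be b)
  = mu_body_sub (liftE_m k F) (if be <? S k then be else S be) (lift_m (S k) b).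
Proof.
  unfold mu_body_sub. rewrite <- (liftE_m_liftE_m F 0 k) by lia.
  nat_cases; try lia; rewrite ?lift_m_fill, lift_m_msub; nat_cases; try lia; reflexivity.
Qed.

Inductive stepsA : tm -> tm -> Prop :=
| stepsA_refl x : stepsA x x
| stepsA_step x y z : stepA x y -> stepsA y z -> stepsA x z.

Lemma stepsA_trans x y z : stepsA x y -> stepsA y z -> stepsA x z.
Proof. induction 1; intros; auto. econstructor; eauto. Qed.

Lemma stepsA_one x y : stepA x y -> stepsA x y.
Proof. intros; econstructor; eauto; constructor. Qed.

Lemma stepsA_map (f : tm -> tm) :
  (forall x y, stepA x y -> stepA (f x) (f y)) ->
  forall x y, stepsA x y -> stepsA (f x) (f y).
Proof. intros Hf x y H; induction H; [constructor | econstructor; eauto]. Qed.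

Lemma stepsA_App a a' b b' : stepsA a a' -> stepsA b b' -> stepsA (App a b) (App a' b').
Proof.
  intros H1 H2. apply stepsA_trans with (App a' b).
  - apply (stepsA_map (fun x => App x b)); auto. intros; constructor; auto.
  - apply (stepsA_map (fun x => App a' x)); auto. intros; constructor; auto.
Qed.

Lemma stepsA_Lam r b b' : stepsA b b' -> stepsA (Lam r b) (Lam r b').
Proof. apply (stepsA_map (fun x => Lam r x)). intros; constructor; auto. Qed.

Lemma stepsA_Mu r be b b' : stepsA b b' -> stepsA (Mu r be b) (Mu r be b').
Proof. apply (stepsA_map (fun x => Mu r be x)). intros; constructor; auto. Qed.

Lemma stepsA_Suc b b' : stepsA b b' -> stepsA (Suc b) (Suc b').
Proof. apply (stepsA_map (fun x => Suc x)). intros; constructor; auto. Qed.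

Lemma stepsA_Nrec r a a' b b' c c' :
  stepsA a a' -> stepsA b b' -> stepsA c c' -> stepsA (Nrec r a b c) (Nrec r a' b' c').
Proof.
  intros H1 H2 H3.
  apply stepsA_trans with (Nrec r a' b c); [|apply stepsA_trans with (Nrec r a' b' c)].
  - apply (stepsA_map (fun x => Nrec r x b c)); auto. intros; constructor; auto.
  - apply (stepsA_map (fun x => Nrec r a' x c)); auto. intros; constructor; auto.
  - apply (stepsA_map (fun x => Nrec r a' b' x)); auto. intros; constructor; auto.
Qed.

Lemma stepA_fill E t t' : stepA t t' -> stepA (fill E t) (fill E t').
Proof. induction E; simpl; intros; auto; constructor; auto. Qed.

Lemma stepsA_fill E t t' : stepsA t t' -> stepsA (fill E t) (fill E t').
Proof. apply stepsA_map. intros; apply stepA_fill; auto. Qed.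

Inductive stepE : ectx -> ectx -> Prop :=
| sE_app1 E E' t : stepE E E' -> stepE (EApp E t) (EApp E' t)
| sE_app2 E t t' : stepA t t' -> stepE (EApp E t) (EApp E t')
| sE_suc E E' : stepE E E' -> stepE (ESuc E) (ESuc E')
| sE_nrec1 r a a' b E : stepA a a' -> stepE (ENrec r a b E) (ENrec r a' b E)
| sE_nrec2 r a b b' E : stepA b b' -> stepE (ENrec r a b E) (ENrec r a b' E)
| sE_nrec3 r a b E E' : stepE E E' -> stepE (ENrec r a b E) (ENrec r a b E').

Lemma stepE_fill E E' t : stepE E E' -> stepA (fill E t) (fill E' t).
Proof. induction 1; simpl; constructor; auto. Qed.

(* Reduction is stable under lifting and both kinds of substitution; the
   root cases are exactly the commutation lemmas above. *)

Lemma stepA_lift_l b b' : stepA b b' -> forall k, stepA (lift_l k b) (lift_l k b').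
Proof.
  induction 1; intros k; cbn [lift_l];
    rewrite ?lift_l_subst_l, ?lift_l_mu_body_sub by lia; try (constructor; auto; fail).
  rewrite (numeral_lift_l n k) by auto. apply st_nrec_suc; auto.
Qed.

Lemma stepA_lift_m b b' : stepA b b' -> forall k, stepA (lift_m k b) (lift_m k b').
Proof.
  induction 1; intros k; cbn [lift_m];
    rewrite ?lift_m_subst_l, ?lift_m_mu_body_sub; try (constructor; auto; fail).
  rewrite (numeral_lift_m n k) by auto. apply st_nrec_suc; auto.
Qed.

Lemma stepA_subst_l b b' : stepA b b' -> forall k u, stepA (subst_l k u b) (subst_l k u b').
Proof.
  induction 1; intros k u0; cbn [subst_l];
    rewrite ?subst_l_subst_l, ?subst_l_mu_body_sub by lia; try (constructor; auto; fail).
  rewrite (numeral_subst_l n k u0) by auto. apply st_nrec_suc; auto.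
Qed.

Lemma stepA_msub b b' : stepA b b' -> forall a E, stepA (msub a E b) (msub a E b').
Proof.
  induction 1; intros a0 E0; cbn [msub];
    rewrite ?msub_subst_l, ?msub_mu_body_sub; try (constructor; auto; fail).
  - rewrite (numeral_msub n a0 E0) by auto. apply st_nrec_suc; auto.
  - destruct (be =? S a0); constructor; try apply stepA_fill; auto.
Qed.

Lemma stepE_liftE_l E E' : stepE E E' -> forall k, stepE (liftE_l k E) (liftE_l k E').
Proof. induction 1; intros; simpl; constructor; auto; apply stepA_lift_l; auto. Qed.

Lemma stepE_liftE_m E E' : stepE E E' -> forall k, stepE (liftE_m k E) (liftE_m k E').
Proof. induction 1; intros; simpl; constructor; auto; apply stepA_lift_m; auto. Qed.

(* Reducing the substituted term (resp. context) gives a reduction sequence,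
   as the variable may be duplicated or erased. *)

Lemma stepsA_subst_l_arg u u' : stepA u u' ->
  forall b k, stepsA (subst_l k u b) (subst_l k u' b).
Proof.
  intros H b; revert u u' H; induction b; intros u u' H k; cbn [subst_l].
  - nat_cases; try constructor. apply stepsA_one; auto.
  - apply stepsA_Lam. apply IHb. apply stepA_lift_l; auto.
  - apply stepsA_App; auto.
  - apply stepsA_Mu. apply IHb. apply stepA_lift_m; auto.
  - constructor.
  - apply stepsA_Suc; auto.
  - apply stepsA_Nrec; auto.
Qed.

Lemma stepsA_msub_ctx E1 E2 : stepE E1 E2 ->
  forall b a, stepsA (msub a E1 b) (msub a E2 b).
Proof.
  intros H b; revert E1 E2 H; induction b; intros E1 E2 H a; cbn [msub].
  - constructor.
  - apply stepsA_Lam. apply IHb. apply stepE_liftE_l; auto.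
  - apply stepsA_App; auto.
  - apply stepsA_Mu. destruct (n =? S a).
    + eapply stepsA_trans.
      * apply stepsA_fill. apply IHb. apply stepE_liftE_m; eauto.
      * apply stepsA_one. apply stepE_fill. apply stepE_liftE_m; auto.
    + apply IHb. apply stepE_liftE_m; auto.
  - constructor.
  - apply stepsA_Suc; auto.
  - apply stepsA_Nrec; auto.
Qed.

Lemma stepA_mu_body_sub E be b b' :
  stepA b b' -> stepA (mu_body_sub E be b) (mu_body_sub E be b').
Proof.
  intros H. unfold mu_body_sub.
  destruct (be =? 0); [apply stepA_fill|]; apply stepA_msub; auto.
Qed.

Lemma stepsA_mu_body_sub_ctx E E' be b :
  stepE E E' -> stepsA (mu_body_sub E be b) (mu_body_sub E' be b).
Proof.
  intros H. unfold mu_body_sub. pose proof (stepE_liftE_m _ _ H 0) as H'.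
  destruct (be =? 0).
  - eapply stepsA_trans.
    + apply stepsA_fill. apply stepsA_msub_ctx; eauto.
    + apply stepsA_one. apply stepE_fill; auto.
  - apply stepsA_msub_ctx; auto.
Qed.

Definition plusA x y := exists z, stepA x z /\ stepsA z y.

Lemma plusA_one x y : stepA x y -> plusA x y.
Proof. intros; exists y; split; auto; constructor. Qed.

Lemma stepsA_plusA x y : stepsA x y -> x = y \/ plusA x y.
Proof. destruct 1; auto. right; exists y; auto. Qed.

(* Induction along non-empty reduction sequences from a strongly
   normalizing term: needed when a step of the expanded term corresponds
   to several steps of the contractum. *)
Lemma SN_A_plus_ind (P : tm -> Prop) :
  (forall x, SN_A x -> (forall y, plusA x y -> P y) -> P x) ->
  forall x, SN_A x -> P x.
Proof.
  intros HP x Hx.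
  assert (H : P x /\ forall y, plusA x y -> P y).
  { induction Hx as [x Hx IH].
    assert (Hplus : forall y, plusA x y -> P y).
    { intros y [z [Hz Hzy]].
      destruct (stepsA_plusA _ _ Hzy) as [<-|Hp];
        [apply (proj1 (IH z Hz)) | apply (proj2 (IH z Hz)); auto]. }
    split; auto. apply HP; auto. constructor; auto. }
  apply (proj1 H).
Qed.

Lemma SN_A_subst_l_inv k u b : SN_A (subst_l k u b) -> SN_A b.
Proof.
  intros H. remember (subst_l k u b) as x. revert b Heqx.
  induction H; intros; subst.
  constructor. intros. eapply H0; eauto. apply stepA_subst_l; auto.
Qed.

Lemma SN_A_Lam r b : SN_A b -> SN_A (Lam r b).
Proof. induction 1. constructor. intros y Hy. inversion Hy; subst. auto. Qed.

Lemma numeral_normal m : is_numeral m = true -> forall t, stepA m t -> False.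
Proof.
  induction m; simpl; intros Hm t0 Ht; try discriminate; inversion Ht; subst; eauto.
  simpl in Hm; discriminate.
Qed.

Lemma SN_A_numeral m : is_numeral m = true -> SN_A m.
Proof. intros. constructor. intros. exfalso; eapply numeral_normal; eauto. Qed.

Fixpoint ectx_depth (E : ectx) : nat :=
  match E with
  | Hole => 0
  | EApp E _ | ESuc E | ENrec _ _ _ E => S (ectx_depth E)
  end.

Lemma stepE_depth E E' : stepE E E' -> ectx_depth E' = ectx_depth E.
Proof. induction 1; simpl; auto. Qed.

Lemma fill_eq_Lam E X r b : Lam r b = fill E X -> E = Hole /\ X = Lam r b.
Proof. destruct E; simpl; intros; try discriminate; auto. Qed.
Lemma fill_eq_Mu E X r be b : Mu r be b = fill E X -> E = Hole /\ X = Mu r be b.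
Proof. destruct E; simpl; intros; try discriminate; auto. Qed.
Lemma fill_eq_Zero E X : Zero = fill E X -> E = Hole /\ X = Zero.
Proof. destruct E; simpl; intros; try discriminate; auto. Qed.
Lemma is_numeral_fill E X : is_numeral (fill E X) = true -> is_numeral X = true.
Proof. induction E; simpl; intros; auto; discriminate. Qed.

(* A term in the hole of a context that neither is an abstraction nor a
   numeral cannot form a beta- or nrec-redex with the context. *)
Definition passive (X : tm) : Prop :=
  match X with Lam _ _ => False | _ => is_numeral X = false end.

(* In the proof below: transport a decomposition of a step from [fill E X]
   through one outer frame, given as a function on contexts. *)
Ltac frame_ih IHE Hstep frame :=
  destruct (IHE _ Hstep) as
    [[E' [H1 ->]]|[[X' [H1 ->]]|[r [be [b [E2 [F [r' [-> [-> [Hd ->]]]]]]]]]]];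
  [ left; eexists; split; [constructor; eauto | reflexivity]
  | right; left; eexists; split; eauto
  | right; right; exists r, be, b, (frame E2), F, r'; simpl;
    split; [reflexivity | split; [reflexivity | split; [lia | reflexivity]]] ].

(* In the proof below: a root step of the outermost frame around a
   mu-abstraction, for which [E2 = Hole]. *)
Ltac root_mu Heq :=
  apply fill_eq_Mu in Heq; destruct Heq as [-> ->];
  right; right; do 3 eexists; exists Hole; do 2 eexists; simpl;
  split; [reflexivity | split; [reflexivity | split; [lia | reflexivity]]].

Lemma stepA_fill_passive_inv E X T : passive X -> stepA (fill E X) T ->
  (exists E', stepE E E' /\ T = fill E' X) \/
  (exists X', stepA X X' /\ T = fill E X') \/
  (exists r be b E2 F r', X = Mu r be b /\ E = compE E2 F /\
     ectx_depth E2 < ectx_depth E /\ T = fill E2 (Mu r' be (mu_body_sub F be b))).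
Proof.
  intros HX; revert T.
  induction E as [|E IHE t|E IHE|r0 a b0 E IHE]; intros T HT; simpl in HT.
  - right; left; eauto.
  - inversion HT; subst.
    + apply fill_eq_Lam in H0; destruct H0; subst; contradiction.
    + root_mu H0.
    + frame_ih IHE H2 (fun E2 => EApp E2 t).
    + left; eexists; split; [apply sE_app2; eauto | reflexivity].
  - inversion HT; subst.
    + root_mu H0.
    + frame_ih IHE H0 ESuc.
  - inversion HT; subst.
    + apply fill_eq_Zero in H3; destruct H3; subst; discriminate.
    + assert (Hnum : is_numeral (fill E X) = true) by (rewrite <- H3; auto).
      apply is_numeral_fill in Hnum. destruct X; simpl in HX, Hnum; try contradiction; congruence.
    + root_mu H3.
    + left; eexists; split; [apply sE_nrec1; eauto | reflexivity].
    + left; eexists; split; [apply sE_nrec2; eauto | reflexivity].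
    + frame_ih IHE H4 (ENrec r0 a b0).
Qed.

Lemma stepA_fill_neutral_inv E X T :
  passive X -> (forall r be b, X <> Mu r be b) -> stepA (fill E X) T ->
  (exists E', stepE E E' /\ T = fill E' X) \/ (exists X', stepA X X' /\ T = fill E X').
Proof.
  intros HX HMu HT.
  destruct (stepA_fill_passive_inv E X T HX HT)
    as [Hctx|[Hhole|[r [be [b [_ [_ [_ [Heq _]]]]]]]]]; auto.
  exfalso; apply (HMu r be b Heq).
Qed.

Lemma SN_A_fill_Var E t : SN_A (fill E t) -> forall n, SN_A (fill E (Var n)).
Proof.
  intros H. remember (fill E t) as x. revert E Heqx.
  induction H as [x Hx IH]. intros E -> n. constructor. intros T HT.
  destruct (stepA_fill_neutral_inv E (Var n) T eq_refl ltac:(discriminate) HT)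
    as [[E' [Hs ->]]|[X' [Hs ->]]].
  - apply (IH (fill E' t)); auto. apply stepE_fill; auto.
  - inversion Hs.
Qed.

Lemma SN_A_fill_Var_App E u :
  SN_A (fill E (Var 0)) -> SN_A u -> SN_A (fill E (App (Var 0) u)).
Proof.
  intros H. revert u. remember (fill E (Var 0)) as x. revert E Heqx.
  induction H as [x Hx IH]. intros E -> u Hu.
  induction Hu as [u Hu IHu]. constructor. intros T HT.
  destruct (stepA_fill_neutral_inv E (App (Var 0) u) T eq_refl ltac:(discriminate) HT)
    as [[E' [Hs ->]]|[X' [Hs ->]]].
  - apply (IH (fill E' (Var 0))); auto. apply stepE_fill; auto. constructor; auto.
  - inversion Hs; subst; [inversion H2 | apply IHu; auto].
Qed.

Lemma SN_A_fill_beta r E b u :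
  SN_A (fill E (subst_l 0 u b)) -> SN_A u -> SN_A (fill E (App (Lam r b) u)).
Proof.
  intros HY. remember (fill E (subst_l 0 u b)) as Y eqn:HeqY. revert E b u HeqY.
  induction HY as [Y HY IH] using SN_A_plus_ind.
  intros E b u HeqY Hu. revert HeqY. induction Hu as [u Hu IHu]. intros HeqY.
  constructor. intros T HT.
  destruct (stepA_fill_neutral_inv E (App (Lam r b) u) T eq_refl ltac:(discriminate) HT)
    as [[E' [Hs ->]]|[X' [Hs ->]]].
  - apply (IH (fill E' (subst_l 0 u b))); auto.
    + subst; apply plusA_one; apply stepE_fill; auto.
    + constructor; auto.
  - inversion Hs; subst.
    + auto.
    + match goal with H : stepA (Lam _ _) _ |- _ => inversion H; subst end.
      apply (IH (fill E (subst_l 0 u b'))); auto.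
      * apply plusA_one; apply stepA_fill; apply stepA_subst_l; auto.
      * constructor; auto.
    + match goal with H : stepA u _ |- _ =>
        destruct (stepsA_plusA _ _ (stepsA_fill E _ _ (stepsA_subst_l_arg _ _ H b 0)))
          as [Heq|Hp] end.
      * apply IHu; auto.
      * apply (IH _ Hp); auto.
Qed.

Lemma SN_A_fill_nrec_zero r E a b :
  SN_A (fill E a) -> SN_A b -> SN_A (fill E (Nrec r a b Zero)).
Proof.
  intros H. revert b. remember (fill E a) as x. revert E a Heqx.
  induction H as [x Hx IH]. intros E a -> b Hb.
  induction Hb as [b Hb IHb]. constructor. intros T HT.
  destruct (stepA_fill_neutral_inv E (Nrec r a b Zero) T eq_refl ltac:(discriminate) HT)
    as [[E' [Hs ->]]|[X' [Hs ->]]].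
  - apply (IH (fill E' a)); auto. apply stepE_fill; auto. constructor; auto.
  - inversion Hs; subst.
    + constructor; auto.
    + apply (IH (fill E a')); auto. apply stepA_fill; auto. constructor; auto.
    + apply IHb; auto.
    + match goal with H : stepA Zero _ |- _ => inversion H end.
Qed.

Lemma SN_A_fill_nrec_suc r E a b m : is_numeral m = true ->
  SN_A (fill E (App (App b m) (Nrec r a b m))) -> SN_A (fill E (Nrec r a b (Suc m))).
Proof.
  intros Hm HY. remember (fill E (App (App b m) (Nrec r a b m))) as Y eqn:HeqY.
  revert E a b HeqY. induction HY as [Y HY IH] using SN_A_plus_ind.
  intros E a b HeqY. subst Y. constructor. intros T HT.
  destruct (stepA_fill_neutral_inv E (Nrec r a b (Suc m)) T)
    as [[E' [Hs ->]]|[X' [Hs ->]]]; [reflexivity | discriminate | exact HT | |].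
  - apply (IH (fill E' (App (App b m) (Nrec r a b m)))); auto.
    apply plusA_one; apply stepE_fill; auto.
  - inversion Hs; subst.
    + auto.
    + apply (IH (fill E (App (App b m) (Nrec r a' b m)))); auto.
      apply plusA_one; apply stepA_fill. apply st_app2. apply st_nrec1; auto.
    + apply (IH (fill E (App (App b' m) (Nrec r a b' m)))); auto.
      exists (fill E (App (App b' m) (Nrec r a b m))). split.
      * apply stepA_fill. apply st_app1. apply st_app1. auto.
      * apply stepsA_one. apply stepA_fill. apply st_app2. apply st_nrec2; auto.
    + exfalso. eapply (numeral_normal (Suc m) Hm); eauto.
Qed.

(* A step from [fill E (Mu r be b)] reduces the
   context (which reduces the body [mu_body_sub E be b] in zero or more
   steps), reduces the body of the abstraction, or absorbs an inner part
   [F] of [E = compE E2 F] into it; the last case is handled by induction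
   on the depth of the context, since [mu_body_sub E2 be (mu_body_sub F be b)
   = mu_body_sub E be b]. *)
Lemma SN_A_fill_Mu E r be b :
  SN_A (mu_body_sub E be b) -> SN_A (fill E (Var 0)) -> SN_A (fill E (Mu r be b)).
Proof.
  intros HX. remember (ectx_depth E) as d eqn:Hd. revert E r b Hd HX.
  induction d as [d IHd] using (well_founded_induction lt_wf).
  intros E r b Hd HX. remember (mu_body_sub E be b) as X eqn:HeqX.
  revert E r b Hd HeqX. induction HX as [X HX IHX] using SN_A_plus_ind.
  intros E r b Hd HeqX HV. remember (fill E (Var 0)) as V eqn:HeqV.
  revert E Hd HeqV r HeqX. induction HV as [V HV IHV].
  intros E Hd -> r HeqX. constructor. intros T HT.
  destruct (stepA_fill_passive_inv E (Mu r be b) T eq_refl HT)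
    as [[E' [Hs ->]]|[[X' [Hs ->]]|[r0 [be0 [b0 [E2 [F [r' [Heq [-> [Hdep ->]]]]]]]]]]].
  - assert (Hd' : d = ectx_depth E') by (rewrite (stepE_depth _ _ Hs); auto).
    destruct (stepsA_plusA _ _ (stepsA_mu_body_sub_ctx E E' be b Hs)) as [Heq|Hp].
    + apply (IHV (fill E' (Var 0))); auto; [apply stepE_fill; auto | congruence].
    + subst X. apply (IHX _ Hp); auto. apply HV. apply stepE_fill; auto.
  - inversion Hs as [| | | | | | | | |r1 be1 b1 b' Hb| | | |]; subst.
    apply (IHX _ (plusA_one _ _ (stepA_mu_body_sub E be b b' Hb))); auto.
    constructor; auto.
  - injection Heq as <- <- <-. subst d.
    apply (IHd (ectx_depth E2) Hdep E2); auto.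
    + rewrite mu_body_sub_compE, <- HeqX. assumption.
    + rewrite fill_compE in HV. apply (SN_A_fill_Var E2 (fill F (Var 0))).
      constructor; auto.
Qed.

(* Simultaneous substitution.  [ssubst s t x] replaces each free
   lambda-variable [n] of [x] by [s n] and, keeping mu-variables unchanged,
   wraps the body of each command [[n]u] addressed to a free mu-variable
   [n] in the context [t n]: the simultaneous structural substitution
   [x[n := n (t n)]]. *)

Definition scons {A : Type} (x : A) (f : nat -> A) (n : nat) : A :=
  match n with 0 => x | S m => f m end.

Definition up_l (s : nat -> tm) : nat -> tm := scons (Var 0) (fun n => lift_l 0 (s n)).
Definition up_m (t : nat -> ectx) : nat -> ectx := scons Hole (fun n => liftE_m 0 (t n)).

Fixpoint ssubst (s : nat -> tm) (t : nat -> ectx) (x : tm) : tm :=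
  match x with
  | Var n => s n
  | Lam r b => Lam r (ssubst (up_l s) (fun n => liftE_l 0 (t n)) b)
  | App a b => App (ssubst s t a) (ssubst s t b)
  | Mu r be b =>
      Mu r be (fill (up_m t be) (ssubst (fun n => lift_m 0 (s n)) (up_m t) b))
  | Zero => Zero
  | Suc a => Suc (ssubst s t a)
  | Nrec r a b c => Nrec r (ssubst s t a) (ssubst s t b) (ssubst s t c)
  end.

Lemma ssubst_id x : ssubst Var (fun _ => Hole) x = x.
Proof.
  induction x; simpl; f_equal; auto.
  - replace (up_l Var) with Var; auto. extensionality m; destruct m; reflexivity.
  - replace (up_m (fun _ => Hole)) with (fun _ : nat => Hole); simpl; auto.
    extensionality m; destruct m; reflexivity.
Qed.

Lemma up_m_substE k u t :
  (fun n => substE k (lift_m 0 u) (up_m t n)) = up_m (fun n => substE k u (t n)).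
Proof. extensionality n. destruct n; simpl; auto. rewrite liftE_m_substE; auto. Qed.

Lemma subst_l_ssubst b : forall s t k u,
  subst_l k u (ssubst s t b)
  = ssubst (fun n => subst_l k u (s n)) (fun n => substE k u (t n)) b.
Proof.
  induction b; intros s t0 k u; simpl; f_equal; auto.
  - rewrite IHb. f_equal.
    + extensionality m. destruct m; simpl; auto. apply subst_l_lift_l_below; lia.
    + extensionality m. apply substE_liftE_l_below; lia.
  - rewrite subst_l_fill, IHb. f_equal.
    + exact (f_equal (fun f => f n) (up_m_substE k u t0)).
    + f_equal; [extensionality m; symmetry; apply lift_m_subst_l | apply up_m_substE].
Qed.

Lemma subst_l_ssubst_up_l s t u b :
  subst_l 0 u (ssubst (up_l s) (fun n => liftE_l 0 (t n)) b) = ssubst (scons u s) t b.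
Proof.
  rewrite subst_l_ssubst. f_equal.
  - extensionality m. destruct m; simpl; auto. apply subst_l_lift_l.
  - extensionality m. apply substE_liftE_l.
Qed.

(* The contexts of a simultaneous substitution followed by [msub a E]: the
   context for [a] is extended by [E]. *)
Definition msub_env (a : nat) (E : ectx) (t : nat -> ectx) (n : nat) : ectx :=
  if n =? a then compE E (msubE a E (t n)) else msubE a E (t n).

Lemma up_m_msub_env a E t :
  msub_env (S a) (liftE_m 0 E) (up_m t) = up_m (msub_env a E t).
Proof.
  extensionality n. unfold msub_env. destruct n; simpl; auto.
  destruct (Nat.eqb_spec n a); subst.
  - rewrite liftE_m_compE, liftE_m0_msubE. auto.
  - rewrite liftE_m0_msubE; auto.
Qed.

Lemma msub_ssubst b : forall s t a E,
  msub a E (ssubst s t b) = ssubst (fun n => msub a E (s n)) (msub_env a E t) b.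
Proof.
  induction b; intros s t0 a E; simpl; f_equal; auto.
  - rewrite IHb. f_equal.
    + extensionality m. destruct m; simpl; auto. symmetry; apply lift_l_msub.
    + extensionality m. unfold msub_env.
      destruct (m =? a); rewrite ?liftE_l_compE, liftE_l_msubE; auto.
  - rewrite msub_fill, IHb, up_m_msub_env.
    replace (fun n0 => msub (S a) (liftE_m 0 E) (lift_m 0 (s n0)))
      with (fun n0 => lift_m 0 (msub a E (s n0)))
      by (extensionality m; apply lift_m0_msub).
    rewrite <- up_m_msub_env. unfold msub_env.
    destruct (Nat.eqb_spec n (S a)); rewrite ?fill_compE; reflexivity.
Qed.

Lemma lift_m_ssubst x : forall j s t t',
  (forall n, t' (if n <? j then n else S n) = liftE_m j (t n)) ->
  lift_m j (ssubst s t x) = ssubst (fun n => lift_m j (s n)) t' (lift_m j x).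
Proof.
  induction x; intros j s t0 t' H; simpl; f_equal; auto.
  - rewrite (IHx j (up_l s) (fun n => liftE_l 0 (t0 n)) (fun n => liftE_l 0 (t' n))).
    + f_equal. extensionality m. destruct m; simpl; auto. lift_lm_comm.
    + intros m. rewrite H. liftE_lm_comm.
  - assert (Hup : forall m, up_m t' (if m <? S j then m else S m) = liftE_m (S j) (up_m t0 m)).
    { intros m. destruct m; simpl; auto. pose proof (H m) as Hm.
      destruct (Nat.ltb_spec m j); nat_cases; try lia; simpl; rewrite Hm; liftE_m_comm. }
    rewrite lift_m_fill, (IHx (S j) _ (up_m t0) (up_m t') Hup), Hup. f_equal. f_equal.
    extensionality m. lift_m_comm.
Qed.

(* A structural step on a substituted mu-abstraction only extends the
   context assigned to its bound variable. *)
Lemma mu_body_sub_ssubst E be s t b :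
  mu_body_sub E be (fill (up_m t be) (ssubst (fun n => lift_m 0 (s n)) (up_m t) b))
  = fill (scons (liftE_m 0 E) (fun n => liftE_m 0 (t n)) be)
      (ssubst (fun n => lift_m 0 (s n)) (scons (liftE_m 0 E) (fun n => liftE_m 0 (t n))) b).
Proof.
  unfold mu_body_sub. rewrite msub_fill, msub_ssubst.
  replace (fun n => msub 0 (liftE_m 0 E) (lift_m 0 (s n))) with (fun n => lift_m 0 (s n))
    by (extensionality m; symmetry; apply msub_lift_m_fresh).
  replace (msub_env 0 (liftE_m 0 E) (up_m t))
    with (scons (liftE_m 0 E) (fun n => liftE_m 0 (t n))).
  - destruct be; simpl; rewrite ?msubE_liftE_m_fresh; reflexivity.
  - extensionality m. unfold msub_env. destruct m; simpl.
    + rewrite compE_Hole. reflexivity.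
    + rewrite msubE_liftE_m_fresh. reflexivity.
Qed.

(* Reducibility.  Since a mu-abstraction binds a new mu-variable, all
   reducibility notions are closed under lifting mu-variables; [lift_m_iter
   k] lifts [k] times at index 0. *)

Fixpoint lift_m_iter (k : nat) (x : tm) : tm :=
  match k with 0 => x | S k => lift_m 0 (lift_m_iter k x) end.
Fixpoint liftE_m_iter (k : nat) (E : ectx) : ectx :=
  match k with 0 => E | S k => liftE_m 0 (liftE_m_iter k E) end.

Lemma lift_m_iter_lift k x : lift_m_iter k (lift_m 0 x) = lift_m 0 (lift_m_iter k x).
Proof. induction k; simpl; auto; rewrite IHk; reflexivity. Qed.
Lemma liftE_m_iter_lift k E : liftE_m_iter k (liftE_m 0 E) = liftE_m 0 (liftE_m_iter k E).
Proof. induction k; simpl; auto; rewrite IHk; reflexivity. Qed.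
Lemma lift_m_iter_Nrec k r a b c :
  lift_m_iter k (Nrec r a b c) = Nrec r (lift_m_iter k a) (lift_m_iter k b) (lift_m_iter k c).
Proof. induction k; simpl; auto; rewrite IHk; reflexivity. Qed.
Lemma lift_m_iter_numeral k m : is_numeral m = true -> lift_m_iter k m = m.
Proof. intros H; induction k; simpl; auto. rewrite IHk. apply numeral_lift_m; auto. Qed.
Lemma lift_m_iter_Var k n : lift_m_iter k (Var n) = Var n.
Proof. induction k; simpl; auto; rewrite IHk; reflexivity. Qed.
Lemma liftE_m_iter_compE k E F :
  liftE_m_iter k (compE E F) = compE (liftE_m_iter k E) (liftE_m_iter k F).
Proof. induction k; simpl; auto. rewrite IHk, liftE_m_compE; auto. Qed.
Lemma liftE_m_iter_Hole k : liftE_m_iter k Hole = Hole.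
Proof. induction k; simpl; auto; rewrite IHk; reflexivity. Qed.
Lemma liftE_m_iter_ESuc k : liftE_m_iter k (ESuc Hole) = ESuc Hole.
Proof. induction k; simpl; auto; rewrite IHk; reflexivity. Qed.
Lemma liftE_m_iter_ENrec k r a b :
  liftE_m_iter k (ENrec r a b Hole) = ENrec r (lift_m_iter k a) (lift_m_iter k b) Hole.
Proof. induction k; simpl; auto; rewrite IHk; reflexivity. Qed.

(* Reducible contexts of each type: at [TNat], those that are strongly
   normalizing around every numeral; at [TArr s t], the empty context and
   the contexts [E0[[] u]] with [E0] reducible at [t] and [u] reducible at
   [s] (the last clause unfolds [RedTm s u] below). *)
Fixpoint RedCtx (r : ty) : ectx -> Prop :=
  match r with
  | TNat => fun E => forall k m, is_numeral m = true -> SN_A (fill (liftE_m_iter k E) m)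
  | TArr s t => fun E => E = Hole \/ exists E0 u, E = compE E0 (EApp Hole u) /\
      RedCtx t E0 /\ (forall k E', RedCtx s E' -> SN_A (fill E' (lift_m_iter k u)))
  end.

Definition RedTm (r : ty) (u : tm) : Prop :=
  forall k E, RedCtx r E -> SN_A (fill E (lift_m_iter k u)).

Lemma RedCtx_Hole r : RedCtx r Hole.
Proof.
  destruct r; simpl; auto.
  intros k m Hm. rewrite liftE_m_iter_Hole. apply SN_A_numeral; auto.
Qed.

Lemma RedCtx_lift r : forall E, RedCtx r E -> RedCtx r (liftE_m 0 E).
Proof.
  induction r; simpl; intros E H.
  - intros k m Hm. rewrite liftE_m_iter_lift. apply (H (S k)); auto.
  - destruct H as [->|[E0 [u [-> [HK HR]]]]]; [left; reflexivity|].
    right. exists (liftE_m 0 E0), (lift_m 0 u).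
    split; [rewrite liftE_m_compE; reflexivity|]. split; auto.
    intros k E' HE'. rewrite lift_m_iter_lift. apply (HR (S k)); auto.
Qed.

Lemma RedCtx_lift_iter r k E : RedCtx r E -> RedCtx r (liftE_m_iter k E).
Proof. induction k; simpl; auto. intros; apply RedCtx_lift; auto. Qed.

Lemma RedTm_lift r u : RedTm r u -> RedTm r (lift_m 0 u).
Proof. intros H k E HE. rewrite lift_m_iter_lift. apply (H (S k)); auto. Qed.

Lemma RedTm_lift_iter r k u : RedTm r u -> RedTm r (lift_m_iter k u).
Proof. induction k; simpl; auto. intros; apply RedTm_lift; auto. Qed.

Lemma RedTm_SN r u : RedTm r u -> SN_A u.
Proof. intros H. apply (H 0 Hole (RedCtx_Hole r)). Qed.

Lemma RedCtx_SN_Var r : forall E, RedCtx r E -> SN_A (fill E (Var 0)).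
Proof.
  induction r; simpl; intros E H.
  - apply (SN_A_fill_Var E Zero). apply (H 0 Zero); auto.
  - destruct H as [->|[E0 [u [-> [HK HR]]]]].
    + simpl. constructor. intros y Hy; inversion Hy.
    + rewrite fill_compE. simpl. apply SN_A_fill_Var_App; auto.
      apply (RedTm_SN r1 u). exact HR.
Qed.

Lemma RedTm_Var r n : RedTm r (Var n).
Proof.
  intros k E HE. rewrite lift_m_iter_Var.
  apply (SN_A_fill_Var E (Var 0)). apply (RedCtx_SN_Var r); auto.
Qed.

Lemma SN_A_fill_nrec_numeral m : is_numeral m = true ->
  forall r E a b, RedCtx r E -> RedTm r a -> RedTm (TArr TNat (TArr r r)) b ->
  SN_A (fill E (Nrec r a b m)).
Proof.
  induction m; simpl; intros Hm r E a b HE Ha Hb; try discriminate.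
  - apply SN_A_fill_nrec_zero; [apply (Ha 0 E HE) | apply (RedTm_SN _ _ Hb)].
  - apply SN_A_fill_nrec_suc; auto.
    replace (fill E (App (App b m) (Nrec r a b m)))
      with (fill (compE (compE E (EApp Hole (Nrec r a b m))) (EApp Hole m)) (lift_m_iter 0 b))
      by (rewrite !fill_compE; reflexivity).
    apply Hb. right. exists (compE E (EApp Hole (Nrec r a b m))), m.
    split; auto. split.
    + right. exists E, (Nrec r a b m). split; auto. split; auto.
      intros k E' HE'. rewrite lift_m_iter_Nrec, (lift_m_iter_numeral k m Hm).
      apply IHm; auto; apply RedTm_lift_iter; auto.
    + intros k E' HE'. rewrite (lift_m_iter_numeral k m Hm). apply (HE' 0 m Hm).
Qed.

Definition RedSubst (G : list ty) (s : nat -> tm) : Prop :=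
  forall i r, nth_error G i = Some r -> RedTm r (s i).
Definition RedEnv (D : list ty) (t : nat -> ectx) : Prop :=
  forall i r, nth_error D i = Some r -> RedCtx r (t i).

Lemma RedSubst_scons G s r u : RedTm r u -> RedSubst G s -> RedSubst (r :: G) (scons u s).
Proof. intros Hu HS [|i] r' Hi; simpl in Hi; [injection Hi as <-; auto | apply HS; auto]. Qed.

Lemma RedSubst_lift G s : RedSubst G s -> RedSubst G (fun n => lift_m 0 (s n)).
Proof. intros HS i r Hi. apply RedTm_lift, HS; auto. Qed.

(* Extending the environment under a mu-binder; with [E = Hole] this is
   [RedEnv (r :: D) (up_m t)]. *)
Lemma RedEnv_extend D t r E : RedCtx r E -> RedEnv D t ->
  RedEnv (r :: D) (scons (liftE_m 0 E) (fun n => liftE_m 0 (t n))).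
Proof.
  intros HE HT [|i] r' Hi; simpl in Hi; apply RedCtx_lift;
    [injection Hi as <-; auto | apply HT; auto].
Qed.

Lemma has_type_lift_m G D x r : has_type G D x r -> forall j D',
  (forall n s, nth_error D n = Some s -> nth_error D' (if n <? j then n else S n) = Some s) ->
  has_type G D' (lift_m j x) r.
Proof.
  induction 1; intros j D' HD; simpl; try (econstructor; eauto; fail).
  assert (HD' : forall n s0, nth_error (r :: D) n = Some s0 ->
            nth_error (r :: D') (if n <? S j then n else S n) = Some s0).
  { intros [|n] s0 Hn; simpl in *; auto. pose proof (HD n s0 Hn) as Hm.
    destruct (Nat.ltb_spec n j); nat_cases; try lia; simpl; auto. }
  econstructor; eauto.
Qed.

Definition Adequate (x : tm) : Prop :=
  forall G D r s t, has_type G D x r -> RedSubst G s -> RedEnv D t ->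
  forall E, RedCtx r E -> SN_A (fill E (ssubst s t x)).

Lemma lift_m_iter_ssubst G D x r s t :
  has_type G D x r -> RedSubst G s -> RedEnv D t -> forall k,
  exists s' t' D', lift_m_iter k (ssubst s t x) = ssubst s' t' (lift_m_iter k x) /\
    has_type G D' (lift_m_iter k x) r /\ RedSubst G s' /\ RedEnv D' t'.
Proof.
  intros Hty HS HT k. induction k as [|k IHk]; [exists s, t, D; auto|].
  destruct IHk as [s' [t' [D' [Heq [Ht [Hs Ht']]]]]].
  exists (fun n => lift_m 0 (s' n)), (up_m t'), (TNat :: D'). simpl. rewrite Heq.
  split; [|split; [|split]].
  - apply lift_m_ssubst. intros n. reflexivity.
  - apply has_type_lift_m with (D := D'); auto.
  - apply RedSubst_lift; auto.
  - apply (RedEnv_extend D' t' TNat Hole); auto. apply RedCtx_Hole.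
Qed.

Lemma RedTm_of_adequate x : (forall k, Adequate (lift_m_iter k x)) ->
  forall G D r s t, has_type G D x r -> RedSubst G s -> RedEnv D t -> RedTm r (ssubst s t x).
Proof.
  intros Hadq G D r s t Hty HS HT k E HE.
  destruct (lift_m_iter_ssubst G D x r s t Hty HS HT k)
    as [s' [t' [D' [-> [Ht [Hs Ht']]]]]].
  apply (Hadq k G D' r s' t'); auto.
Qed.

(* Adequacy, one term constructor at a time.  Subterms in non-evaluation
   positions are needed as reducible terms, hence at all lifts. *)

Lemma adequate_Var n : Adequate (Var n).
Proof. intros G D r s t Hty HS HT E HE. inversion Hty; subst. apply (HS _ _ H2 0 E HE). Qed.

Lemma adequate_Zero : Adequate Zero.
Proof. intros G D r s t Hty HS HT E HE. inversion Hty; subst. apply (HE 0 Zero); auto. Qed.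

Lemma adequate_Lam r b : Adequate b -> Adequate (Lam r b).
Proof.
  intros Hb G D r' s t Hty HS HT E HE. inversion Hty; subst. simpl.
  destruct HE as [->|[E0 [u [-> [HK HR]]]]].
  - simpl. apply SN_A_Lam. apply (SN_A_subst_l_inv 0 (Var 0)).
    rewrite subst_l_ssubst_up_l.
    apply (Hb _ D _ _ t H4 (RedSubst_scons _ _ _ _ (RedTm_Var r 0) HS) HT Hole).
    apply RedCtx_Hole.
  - rewrite fill_compE. simpl. apply SN_A_fill_beta.
    + rewrite subst_l_ssubst_up_l. apply (Hb _ D _ _ t H4); auto.
      apply RedSubst_scons; auto.
    + apply (RedTm_SN _ _ HR).
Qed.

Lemma adequate_App a b :
  Adequate a -> (forall k, Adequate (lift_m_iter k b)) -> Adequate (App a b).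
Proof.
  intros Ha Hb G D r s t Hty HS HT E HE. inversion Hty; subst. simpl.
  replace (fill E (App (ssubst s t a) (ssubst s t b)))
    with (fill (compE E (EApp Hole (ssubst s t b))) (ssubst s t a))
    by (rewrite fill_compE; reflexivity).
  apply (Ha G D (TArr s0 r) s t); auto.
  right. exists E, (ssubst s t b). split; [reflexivity | split; auto].
  apply (RedTm_of_adequate b Hb G D s0 s t); auto.
Qed.

(* By the structural expansion lemma, with the bound mu-variable of the
   body instantiated by the (lifted) surrounding context [E]. *)
Lemma adequate_Mu r be b : Adequate b -> Adequate (Mu r be b).
Proof.
  intros Hb G D r' s t Hty HS HT E HE. inversion Hty; subst. simpl.
  apply SN_A_fill_Mu; [|apply (RedCtx_SN_Var r'); auto].
  rewrite mu_body_sub_ssubst.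
  assert (HT' := RedEnv_extend D t r' E HE HT).
  apply (Hb G (r' :: D) s0); auto.
  apply RedSubst_lift; auto.
Qed.

Lemma adequate_Suc a : Adequate a -> Adequate (Suc a).
Proof.
  intros Ha G D r s t Hty HS HT E HE. inversion Hty; subst. simpl.
  replace (fill E (Suc (ssubst s t a))) with (fill (compE E (ESuc Hole)) (ssubst s t a))
    by (rewrite fill_compE; reflexivity).
  apply (Ha G D TNat s t); auto.
  intros k m Hm. rewrite liftE_m_iter_compE, fill_compE, liftE_m_iter_ESuc.
  apply HE. simpl; auto.
Qed.

Lemma adequate_Nrec r a b c :
  (forall k, Adequate (lift_m_iter k a)) -> (forall k, Adequate (lift_m_iter k b)) ->
  Adequate c -> Adequate (Nrec r a b c).
Proof.
  intros Ha Hb Hc G D r' s t Hty HS HT E HE. inversion Hty; subst. simpl.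
  replace (fill E (Nrec r' (ssubst s t a) (ssubst s t b) (ssubst s t c)))
    with (fill (compE E (ENrec r' (ssubst s t a) (ssubst s t b) Hole)) (ssubst s t c))
    by (rewrite fill_compE; reflexivity).
  apply (Hc G D TNat s t); auto.
  intros k m Hm. rewrite liftE_m_iter_compE, fill_compE, liftE_m_iter_ENrec. simpl.
  apply SN_A_fill_nrec_numeral; auto.
  - apply RedCtx_lift_iter; auto.
  - apply RedTm_lift_iter. apply (RedTm_of_adequate a Ha G D r' s t); auto.
  - apply RedTm_lift_iter. apply (RedTm_of_adequate b Hb G D _ s t); auto.
Qed.

Fixpoint tm_size (x : tm) : nat :=
  match x with
  | Var _ | Zero => 1
  | Lam _ b | Mu _ _ b | Suc b => S (tm_size b)
  | App a b => S (tm_size a + tm_size b)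
  | Nrec _ a b c => S (tm_size a + tm_size b + tm_size c)
  end.

Lemma tm_size_lift_m_iter k x : tm_size (lift_m_iter k x) = tm_size x.
Proof.
  assert (Hlift : forall y j, tm_size (lift_m j y) = tm_size y)
    by (induction y; intros; simpl; auto).
  induction k; simpl; auto. rewrite Hlift; auto.
Qed.

(* The adequacy lemma, by induction on the size of the term, which is
   invariant under lifting. *)
Lemma adequacy x : Adequate x.
Proof.
  induction x as [x IH] using (well_founded_induction (well_founded_ltof tm tm_size)).
  assert (IHlift : forall y, tm_size y < tm_size x -> forall k, Adequate (lift_m_iter k y)).
  { intros y Hy k. apply IH. unfold ltof. rewrite tm_size_lift_m_iter. auto. }
  unfold ltof in IH. destruct x; simpl in IH, IHlift.
  - apply adequate_Var.
  - apply adequate_Lam, IH; lia.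
  - apply adequate_App; [apply IH | apply IHlift]; lia.
  - apply adequate_Mu, IH; lia.
  - apply adequate_Zero.
  - apply adequate_Suc, IH; lia.
  - apply adequate_Nrec; [apply IHlift | apply IHlift | apply IH]; lia.
Qed.

Theorem mainTheorem14 :
  forall (G D : list ty) (t : tm) (r : ty), has_type G D t r -> SN_A t.
Proof.
  intros G D t r Hty.
  apply (RedTm_SN r). rewrite <- (ssubst_id t).
  apply (RedTm_of_adequate t (fun k => adequacy _) G D r Var (fun _ => Hole) Hty).
  - intros i r' _. apply RedTm_Var.
  - intros i r' _. apply RedCtx_Hole.
Qed.
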